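(* For any simplicial models $\mathcal{C}$, $\mathcal{D}$ with facets $F\in\mathcal{F}(C^{\mathcal C})$, $G\in\mathcal{F}(C^{\mathcal D})$, if $\mathcal{C},F$ and $\mathcal{D},G$ are bisimilar then they are $\mathcal{L}$-logically equivalent. Likewise, for any first-order Kripke models $\mathcal{M},\mathcal{N}$ with worlds $w\in W^{\mathcal M}$, $v\in W^{\mathcal N}$, if $\mathcal{M},w$ and $\mathcal{N},v$ are bisimilar then they are $\mathcal{L}$-logically equivalent.
   Context: Fix a nonempty finite set $\mathbf{A}$ of agents, a countable set $\mathbf{X}$ of variables with $\mathbf{A}\cap\mathbf{X}=\emptyset$, and a countable set $\mathbf{P}$ of unary predicate letters. Formulas of $\mathcal{L}$ and their free variables are defined simultaneously: $\phi ::= p_x \mid \top \mid \neg\phi \mid (\phi\wedge\phi) \mid [x:=a]\phi \mid \mathsf{K}_X\alpha$, where $p\in\mathbf{P}$, $x\in\mathbf{X}$, $a\in\mathbf{A}$, $X\subseteq\mathbf{X}$ is finite (possibly empty) and $\alpha$ is a formula with $FV(\alpha)=\emptyset$; $FV(p_x)=\{x\}$, $FV(\top)=\emptyset$, $FV(\neg\phi)=FV(\phi)$, $FV(\phi\wedge\psi)=FV(\phi)\cup FV(\psi)$, $FV([x:=a]\phi)=FV(\phi)\setminus\{x\}$, $FV(\mathsf{K}_X\alpha)=X$. Formulas without free variables are sentences. A simplicial model is $\mathcal{C}=(\mathcal{V},C,\chi,\ell)$ with $\mathcal{V}\neq\emptyset$, $C\subseteq\wp(\mathcal{V})$ such that $\emptyset\notin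 C$, $C$ is closed under nonempty subsets and contains every singleton; $\chi:\mathcal{V}\to\mathbf{A}$ is injective on every member of $C$; $\ell:\mathbf{P}\to\wp(\mathcal{V})$. The facets $\mathcal{F}(C)$ are the inclusion-maximal elements of $C$. A first-order Kripke model is $\mathcal{M}=(W,\delta,\{R_a\}_{a\in\mathbf{A}},\rho)$ with $W\neq\emptyset$, $\delta:W\to\wp(\mathbf{A})\setminus\{\emptyset\}$, $R_a\subseteq W\times W$ with $R_a(w)=\emptyset$ whenever $a\notin\delta(w)$, and $\rho:\mathbf{P}\times W\to\wp(\mathbf{A})$ with $\rho(p,w)\subseteq\delta(w)$. An assignment $\sigma:\mathbf{X}\to\mathbf{A}$ is admissible for $\mathcal{C},F,\phi$ if $\sigma[FV(\phi)]\subseteq\chi[F]$, and for $\mathcal{M},w,\phi$ if $\sigma[FV(\phi)]\subseteq\delta(w)$. Satisfaction is defined for admissible assignments (Boolean clauses standard): $\mathcal{C},F,\sigma\Vdash p_x$ iff $\sigma(x)\in\chi[F\cap\ell(p)]$; $\mathcal{C},F,\sigma\Vdash[x:=a]\phi$ iff ($a\in\chi[F]$ implies $\mathcal{C},F,\sigma[x\mapsto a]\Vdash\phi$); $\mathcal{C},F,\sigma\Vdash\mathsf{K}_X\alpha$ iff for all $G\in\mathcal{F}(C)$ with $\sigma[X]\subseteq\chi[F\cap G]$, $\mathcal{C},G,\sigma\Vdash\alpha$. $\mathcal{M},w,\sigma\vDash p_x$ iff $\sigma(x)\in\rho(p,w)$; $\mathcal{M},w,\sigma\vDash[x:=a]\phi$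 iff ($a\in\delta(w)$ implies $\mathcal{M},w,\sigma[x\mapsto a]\vDash\phi$); $\mathcal{M},w,\sigma\vDash\mathsf{K}_X\alpha$ iff for all $v\in\bigcap_{a\in\sigma[X]}R_a(w)$ (the empty intersection being $W$), $\mathcal{M},v,\sigma\vDash\alpha$. Truth of a sentence is independent of the assignment. Two pointed models (of the same kind) are $\mathcal{L}$-logically equivalent if they satisfy exactly the same sentences. A bisimulation between simplicial models $\mathcal{C},\mathcal{D}$ is $Z\subseteq\mathcal{F}(C^{\mathcal C})\times\mathcal{F}(C^{\mathcal D})$ such that for all $(F,G)\in Z$: (Inv) $\chi^{\mathcal C}[F]=\chi^{\mathcal D}[G]$ and $\chi^{\mathcal C}[F\cap\ell^{\mathcal C}(p)]=\chi^{\mathcal D}[G\cap\ell^{\mathcal D}(p)]$ for all $p$; (Zig) for all $A\subseteq\mathbf{A}$ and facets $F'$ of $\mathcal{C}$ with $A\subseteq\chi^{\mathcal C}[F\cap F']$ there is a facet $G'$ of $\mathcal{D}$ with $A\subseteq\chi^{\mathcal D}[G\cap G']$ and $(F',G')\in Z$; (Zag) the symmetric condition. A bisimulation between first-order Kripke models $\mathcal{M},\mathcal{N}$ is $Z\subseteq W^{\mathcal M}\times W^{\mathcal N}$ such that for all $(w,v)\in Z$: (Inv) $\delta^{\mathcal M}(w)=\delta^{\mathcal N}(v)$ and $\rho^{\mathcal M}(p,w)=\rho^{\mathcal N}(p,v)$ for all $p$; (Zig) for all $A\subseteq\mathbf{A}$ and $w'\in\bigcap_{a\in A}R^{\mathcal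 M}_a(w)$ there is $v'\in\bigcap_{a\in A}R^{\mathcal N}_a(v)$ with $(w',v')\in Z$; (Zag) symmetric. Pointed models are bisimilar if some bisimulation relates the points. *)

From mathcomp Require Import all_boot.
Set Implicit Arguments. Unset Strict Implicit. Unset Printing Implicit Defensive.

Section Language.
Variables (Ag : finType) (Var Pr : countType).

Inductive form : Type :=
| Pred : Pr -> Var -> form
| Top : form
| Neg : form -> form
| And : form -> form -> form
| Assign : Var -> Ag -> form -> form
| Know : seq Var -> form -> form.

Fixpoint fv (phi : form) (y : Var) : Prop :=
  match phi with
  | Pred _ x => y = x
  | Top => False
  | Neg f => fv f y
  | And f g => fv f y \/ fv g y
  | Assign x _ f => fv f y /\ y <> x
  | Know X _ => y \in X
  end.

Definition sentence (phi : form) : Prop := forall y, ~ fv phi y.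

Fixpoint wf (phi : form) : Prop :=
  match phi with
  | Pred _ _ | Top => True
  | Neg f => wf f
  | And f g => wf f /\ wf g
  | Assign _ _ f => wf f
  | Know _ f => wf f /\ sentence f
  end.

Definition upd (s : Var -> Ag) (x : Var) (a : Ag) : Var -> Ag :=
  fun y => if y == x then a else s y.
End Language.

Record smodel (Ag : finType) (Pr : countType) := SModel {
  sV : Type;
  sV_inh : inhabited sV;
  sC : (sV -> Prop) -> Prop;
  sC_nonempty : forall s, sC s -> exists v, s v;
  sC_down : forall s t, sC s -> (exists v, t v) ->
              (forall v, t v -> s v) -> sC t;
  sC_single : forall v, sC (fun u => u = v);
  schi : sV -> Ag;
  schi_inj : forall s, sC s -> forall u v, s u -> s v -> schi u = schi v -> u = v;
  sell : Pr -> sV -> Prop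
}.

Section Simplicial.
Variables (Ag : finType) (Var Pr : countType).
Implicit Types (M : smodel Ag Pr).

Definition facet M (F : sV M -> Prop) : Prop :=
  sC F /\ forall G, sC G -> (forall v, F v -> G v) -> (forall v, G v -> F v).

Definition img M (S : sV M -> Prop) (a : Ag) : Prop :=
  exists v, S v /\ schi v = a.

Fixpoint ssat M (F : sV M -> Prop) (s : Var -> Ag) (phi : form Ag Var Pr) : Prop :=
  match phi with
  | Pred p x => img (fun v => F v /\ sell p v) (s x)
  | Top => True
  | Neg f => ~ ssat F s f
  | And f g => ssat F s f /\ ssat F s g
  | Assign x a f => img F a -> ssat F (upd s x a) f
  | Know X f => forall G, facet G ->
                  (forall y, y \in X -> img (fun v => F v /\ G v) (s y)) ->
                  ssat G s f
  end.

Definition struth M (F : sV M -> Prop) (phi : form Ag Var Pr) : Prop :=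
  forall s, ssat F s phi.

Definition sequiv M1 M2 (F : sV M1 -> Prop) (G : sV M2 -> Prop) : Prop :=
  forall phi : form Ag Var Pr, wf phi -> sentence phi ->
    (struth F phi <-> struth G phi).
End Simplicial.

Section SBisim.
Variables (Ag : finType) (Pr : countType).

Definition sbisim (M1 M2 : smodel Ag Pr)
    (Z : (sV M1 -> Prop) -> (sV M2 -> Prop) -> Prop) : Prop :=
  forall F G, Z F G ->
    facet F /\ facet G /\
    (* Inv *)
    (forall a, img F a <-> img G a) /\
    (forall p a, img (fun v => F v /\ sell p v) a <-> img (fun v => G v /\ sell p v) a) /\
    (* Zig *)
    (forall (A : Ag -> Prop) F', facet F' ->
       (forall a, A a -> img (fun v => F v /\ F' v) a) ->
       exists G', facet G' /\ (forall a, A a -> img (fun v => G v /\ G' v) a) /\ Z F' G') /\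
    (* Zag *)
    (forall (A : Ag -> Prop) G', facet G' ->
       (forall a, A a -> img (fun v => G v /\ G' v) a) ->
       exists F', facet F' /\ (forall a, A a -> img (fun v => F v /\ F' v) a) /\ Z F' G').

Definition sbisimilar (M1 M2 : smodel Ag Pr) (F : sV M1 -> Prop) (G : sV M2 -> Prop) : Prop :=
  exists Z, sbisim Z /\ Z F G.
End SBisim.

Record kmodel (Ag : finType) (Pr : countType) := KModel {
  kW : Type;
  kW_inh : inhabited kW;
  kdelta : kW -> Ag -> Prop;
  kdelta_ne : forall w, exists a, kdelta w a;
  kR : Ag -> kW -> kW -> Prop;
  kR_dom : forall a w w', kR a w w' -> kdelta w a;
  krho : Pr -> kW -> Ag -> Prop;
  krho_sub : forall p w a, krho p w a -> kdelta w a
}.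

Section Kripke.
Variables (Ag : finType) (Var Pr : countType).
Implicit Types (M : kmodel Ag Pr).

Fixpoint ksat M (w : kW M) (s : Var -> Ag) (phi : form Ag Var Pr) : Prop :=
  match phi with
  | Pred p x => krho p w (s x)
  | Top => True
  | Neg f => ~ ksat w s f
  | And f g => ksat w s f /\ ksat w s g
  | Assign x a f => kdelta w a -> ksat w (upd s x a) f
  | Know X f => forall v, (forall y, y \in X -> kR (s y) w v) -> ksat v s f
  end.

Definition ktruth M (w : kW M) (phi : form Ag Var Pr) : Prop := forall s, ksat w s phi.

Definition kequiv M1 M2 (w : kW M1) (v : kW M2) : Prop :=
  forall phi : form Ag Var Pr, wf phi -> sentence phi ->
    (ktruth w phi <-> ktruth v phi).
End Kripke.

Section KBisim.
Variables (Ag : finType) (Pr : countType).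

Definition kbisim (M1 M2 : kmodel Ag Pr) (Z : kW M1 -> kW M2 -> Prop) : Prop :=
  forall w v, Z w v ->
    (forall a, kdelta w a <-> kdelta v a) /\
    (forall p a, krho p w a <-> krho p v a) /\
    (forall (A : Ag -> Prop) w', (forall a, A a -> kR a w w') ->
       exists v', (forall a, A a -> kR a v v') /\ Z w' v') /\
    (forall (A : Ag -> Prop) v', (forall a, A a -> kR a v v') ->
       exists w', (forall a, A a -> kR a w w') /\ Z w' v').

Definition kbisimilar (M1 M2 : kmodel Ag Pr) (w : kW M1) (v : kW M2) : Prop :=
  exists Z, kbisim Z /\ Z w v.
End KBisim.

From mathcomp Require Import all_boot.
From Stdlib Require Import Setoid.

Set Implicit Arguments.
Unset Strict Implicit.
Unset Printing Implicit Defensive.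

(* Both semantics are invariant under bisimulation, by induction on formulas
   with the relating pair of points generalized: the atomic and assignment
   clauses use (Inv), and K_X alpha uses (Zig)/(Zag) for the set of agents
   named by X under the current assignment.  The invariance holds for every
   formula and every assignment. *)

Definition assigned (Var : eqType) (Ag : Type) (s : Var -> Ag) (X : seq Var) (a : Ag) : Prop :=
  exists2 y, y \in X & s y = a.

Lemma forall_assignedP (Var : eqType) (Ag : Type) {s : Var -> Ag} {X : seq Var}
    {P : Ag -> Prop} :
  (forall y, y \in X -> P (s y)) <-> (forall a, assigned s X a -> P a).
Proof. by split=> [HX _ [y Xy <-] | HA y Xy]; [apply: HX | apply: HA; exists y]. Qed.

Section SimplicialInvariance.
Variables (Ag : finType) (Var Pr : countType) (C D : smodel Ag Pr).
Variable Z : (sV C -> Prop) -> (sV D -> Prop) -> Prop.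
Hypothesis bisimZ : sbisim Z.

Lemma ssat_sbisim (phi : form Ag Var Pr) F G s :
  Z F G -> ssat F s phi <-> ssat G s phi.
Proof.
elim: phi F G s => [p x|| f IH | f IHf g IHg | x a f IH | X f IH] F G s ZFG /=;
  have [_ [_ [inv_img [inv_pred [zig zag]]]]] := bisimZ ZFG.
- exact: inv_pred.
- by [].
- by rewrite (IH F G s ZFG).
- by rewrite (IHf F G s ZFG) (IHg F G s ZFG).
- by rewrite (IH F G _ ZFG) inv_img.
- split=> HF.
  + move=> G' facetG' /forall_assignedP HX.
    have [F' [facetF' [/forall_assignedP HA ZF'G']]] := zag _ _ facetG' HX.
    by rewrite -(IH F' G' s ZF'G'); apply: HF.
  + move=> F' facetF' /forall_assignedP HX.
    have [G' [facetG' [/forall_assignedP HA ZF'G']]] := zig _ _ facetF' HX.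
    by rewrite (IH F' G' s ZF'G'); apply: HF.
Qed.

End SimplicialInvariance.

Section KripkeInvariance.
Variables (Ag : finType) (Var Pr : countType) (M N : kmodel Ag Pr).
Variable Z : kW M -> kW N -> Prop.
Hypothesis bisimZ : kbisim Z.

Lemma ksat_kbisim (phi : form Ag Var Pr) w v s :
  Z w v -> ksat w s phi <-> ksat v s phi.
Proof.
elim: phi w v s => [p x|| f IH | f IHf g IHg | x a f IH | X f IH] w v s Zwv /=;
  have [inv_delta [inv_rho [zig zag]]] := bisimZ Zwv.
- exact: inv_rho.
- by [].
- by rewrite (IH w v s Zwv).
- by rewrite (IHf w v s Zwv) (IHg w v s Zwv).
- by rewrite (IH w v _ Zwv) inv_delta.
- split=> Hw.
  + move=> v' /(forall_assignedP (P := fun a => kR a v v')) HX.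
    have [w' [/forall_assignedP HA Zw'v']] := zag _ _ HX.
    by rewrite -(IH w' v' s Zw'v'); apply: Hw.
  + move=> w' /(forall_assignedP (P := fun a => kR a w w')) HX.
    have [v' [/forall_assignedP HA Zw'v']] := zig _ _ HX.
    by rewrite (IH w' v' s Zw'v'); apply: Hw.
Qed.

End KripkeInvariance.

Lemma sbisimilar_struth (Ag : finType) (Var Pr : countType) (C D : smodel Ag Pr)
    (F : sV C -> Prop) (G : sV D -> Prop) (phi : form Ag Var Pr) :
  sbisimilar F G -> struth F phi <-> struth G phi.
Proof.
move=> [Z [bisimZ ZFG]].
by split=> H s; [rewrite -(ssat_sbisim bisimZ _ _ ZFG) | rewrite (ssat_sbisim bisimZ _ _ ZFG)].
Qed.

Lemma kbisimilar_ktruth (Ag : finType) (Var Pr : countType) (M N : kmodel Ag Pr)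
    (w : kW M) (v : kW N) (phi : form Ag Var Pr) :
  kbisimilar w v -> ktruth w phi <-> ktruth v phi.
Proof.
move=> [Z [bisimZ Zwv]].
by split=> H s; [rewrite -(ksat_kbisim bisimZ _ _ Zwv) | rewrite (ksat_kbisim bisimZ _ _ Zwv)].
Qed.

Theorem theorem1 (Ag : finType) (Var Pr : countType) (hAg : 0 < #|Ag|) :
  (forall (C D : smodel Ag Pr) (F : sV C -> Prop) (G : sV D -> Prop),
      facet F -> facet G -> sbisimilar F G -> sequiv Var F G) /\
  (forall (M N : kmodel Ag Pr) (w : kW M) (v : kW N),
      kbisimilar w v -> kequiv Var w v).
Proof.
split.
- by move=> C D F G _ _ bisimFG phi _ _; apply: sbisimilar_struth.
- by move=> M N w v bisimwv phi _ _; apply: kbisimilar_ktruth.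
Qed.
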